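(* Grant (Lip-Conv), (Conv) and (Bern-ERM), let $\theta=1/(2A)$, and consider the event $$\Omega=\Big\{\forall f\in F\text{ with }\|f-f^*\|_{L_2}\le r_2(\theta):\ |(P-P_N)\mathcal L_f|\le\theta r_2^2(\theta)\Big\}.$$ On $\Omega$, any $\hat f^{ERM}\in\operatorname{argmin}_{f\in F}P_N\ell_f$ satisfies $\|\hat f^{ERM}-f^*\|_{L_2}\le r_2(\theta)$ and $P\mathcal L_{\hat f^{ERM}}\le\theta r_2^2(\theta)$.
   Context: Setting: $\bar{\mathcal Y}\subset\mathbb R$ convex, $F\subset L_2(\mu)$ a class of measurable functions $\mathcal X\to\bar{\mathcal Y}$, $\ell_f(x,y)=\bar\ell(f(x),y)$, $(X,Y)\sim P$, $X\sim\mu$, $Pg=\mathbb Eg(X,Y)$; $f^*$ is the unique minimizer of $f\mapsto P\ell_f$ over $F$, $\mathcal L_f=\ell_f-\ell_{f^*}$, $\|g\|_{L_2}=(\mathbb Eg(X)^2)^{1/2}$. Data $(X_i,Y_i)_{i=1}^N$, $P_Ng=\frac1N\sum_{i=1}^Ng(X_i,Y_i)$. (Lip-Conv): there is $L>0$ with $u\mapsto\bar\ell(u,y)$ convex and $L$-Lipschitz for every $y$. (Conv): $F$ convex. $r_2(\theta)$ is a given positive number (the complexity parameter, $r_2(\theta)\ge\inf\{r>0:32L\,w((F-f^* )\cap rB_{L_2})\le\theta r^2\sqrt N\}$, $w$ the Gaussian mean width). (Bern-ERM): there is $A>0$ such that every $f\in F$ with $\|f-f^*\|_{L_2}=r_2(1/(2A))$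 satisfies $\|f-f^*\|_{L_2}^2\le AP\mathcal L_f$. *)

From Stdlib Require Import Reals Lra.
Open Scope R_scope.

(* An abstract probability expectation on a sample space T: a set of
   integrable functions (a vector space containing constants) and a
   positive, normalised linear functional on it. *)
Record Expectation (T : Type) := {
  integrable : (T -> R) -> Prop;
  expect : (T -> R) -> R;
  int_const : forall c : R, integrable (fun _ => c);
  int_add : forall g h, integrable g -> integrable h -> integrable (fun z => g z + h z);
  int_scal : forall (a : R) g, integrable g -> integrable (fun z => a * g z);
  exp_add : forall g h, integrable g -> integrable h ->
      expect (fun z => g z + h z) = expect g + expect h;
  exp_scal : forall (a : R) g, integrable g -> expect (fun z => a * g z) = a * expect g;
  exp_mono : forall g h, integrable g -> integrable h ->
      (forall z, g z <= h z) -> expect g <= expect h;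
  exp_one : expect (fun _ => 1) = 1
}.
Arguments integrable {T} _ _.
Arguments expect {T} _ _.

(* P is the law of (X,Y) on X * R; the L2(mu) norm, mu the law of X. *)
Definition L2norm {X : Type} (P : Expectation (X * R)) (g : X -> R) : R :=
  sqrt (expect P (fun z => (g (fst z)) ^ 2)).

Definition lossf {X : Type} (lbar : R -> R -> R) (f : X -> R) : X * R -> R :=
  fun z => lbar (f (fst z)) (snd z).

Definition excess {X : Type} (lbar : R -> R -> R) (fstar f : X -> R) : X * R -> R :=
  fun z => lossf lbar f z - lossf lbar fstar z.

(* empirical mean P_N g = (1/N) sum_{i=1}^N g(X_i,Y_i), data indexed 0..N-1 *)
Definition PN {X : Type} (N : nat) (data : nat -> X * R) (g : X * R -> R) : R :=
  / INR N * sum_f_R0 (fun i => g (data i)) (Nat.pred N).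

Definition convex_set (Ybar : R -> Prop) : Prop :=
  forall u v t, Ybar u -> Ybar v -> 0 <= t <= 1 -> Ybar (t * u + (1 - t) * v).

Definition convex_class {X : Type} (F : (X -> R) -> Prop) : Prop :=
  forall f g t, F f -> F g -> 0 <= t <= 1 -> F (fun x => t * f x + (1 - t) * g x).

From Stdlib Require Import Reals Lra Lia FunctionalExtensionality.
Open Scope R_scope.

(* Write r = r_2(theta), theta = 1/(2A).  Since fhat minimises the empirical
   risk, P_N L_fhat <= 0.  Convexity of the loss in its first argument
   propagates this to every point f_t = t fhat + (1-t) f* of the segment
   [f*, fhat]: P_N L_{f_t} <= t P_N L_fhat <= 0, and f_t lies in F by (Conv).
   If ||fhat - f*|| > r, the point t = r / ||fhat - f*|| lies on the sphere of
   radius r around f*.  There (Bern-ERM) gives r^2 <= A P L_{f_t} while the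
   event Omega gives P L_{f_t} <= P_N L_{f_t} + theta r^2 <= r^2/(2A), which is
   absurd.  Hence ||fhat - f*|| <= r, and Omega applied to fhat itself bounds
   its excess risk by theta r^2. *)

Definition segment {X : Type} (t : R) (f g : X -> R) : X -> R :=
  fun x => t * f x + (1 - t) * g x.

Lemma PN_mono {X : Type} N data (g h : X * R -> R) :
  (forall z, g z <= h z) -> PN N data g <= PN N data h.
Proof.
  intro Hgh. unfold PN. apply Rmult_le_compat_l.
  - destruct N as [|N]; [simpl; rewrite Rinv_0; lra|].
    left; apply Rinv_0_lt_compat, lt_0_INR; lia.
  - apply sum_Rle; intros; apply Hgh.
Qed.

Lemma PN_scal {X : Type} N data (t : R) (g : X * R -> R) :
  PN N data (fun z => t * g z) = t * PN N data g.
Proof.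
  unfold PN.
  replace (fun i => t * g (data i)) with (fun i => g (data i) * t)
    by (apply functional_extensionality; intro; ring).
  rewrite <- scal_sum. ring.
Qed.

Lemma PN_sub {X : Type} N data (g h : X * R -> R) :
  PN N data (fun z => g z - h z) = PN N data g - PN N data h.
Proof.
  unfold PN. rewrite <- Rmult_minus_distr_l. f_equal.
  rewrite <- minus_sum. apply sum_eq; intros; ring.
Qed.

(* Square-integrability of a difference follows from that of the two
   functions and of their midpoint (parallelogram identity); this is how
   (Conv) supplies integrability of (fhat - fstar)^2. *)
Lemma integrable_sq_diff {T : Type} (P : Expectation T) (u v : T -> R) :
  integrable P (fun z => u z ^ 2) -> integrable P (fun z => v z ^ 2) ->
  integrable P (fun z => (/ 2 * u z + (1 - / 2) * v z) ^ 2) ->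
  integrable P (fun z => (u z - v z) ^ 2).
Proof.
  intros Hu Hv Hmid.
  replace (fun z => (u z - v z) ^ 2) with
    (fun z => (2 * u z ^ 2 + 2 * v z ^ 2) + (-4) * (/ 2 * u z + (1 - / 2) * v z) ^ 2)
    by (apply functional_extensionality; intro; field).
  apply int_add; [apply int_add|]; apply int_scal; assumption.
Qed.

Lemma L2norm_segment {X : Type} (P : Expectation (X * R)) (f g : X -> R) (t : R) :
  0 <= t -> integrable P (fun z => (f (fst z) - g (fst z)) ^ 2) ->
  L2norm P (fun x => segment t f g x - g x) = t * L2norm P (fun x => f x - g x).
Proof.
  intros Ht Hint. unfold L2norm.
  replace (fun z : X * R => (segment t f g (fst z) - g (fst z)) ^ 2) with
    (fun z : X * R => t ^ 2 * (f (fst z) - g (fst z)) ^ 2)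
    by (apply functional_extensionality; intro; unfold segment; ring).
  rewrite exp_scal by assumption.
  rewrite sqrt_mult_alt by apply pow2_ge_0.
  now rewrite sqrt_pow2.
Qed.

Lemma segment_hits_sphere {X : Type} (P : Expectation (X * R)) (f g : X -> R) (r : R) :
  integrable P (fun z => (f (fst z) - g (fst z)) ^ 2) ->
  0 < r < L2norm P (fun x => f x - g x) ->
  exists t, 0 < t < 1 /\ L2norm P (fun x => segment t f g x - g x) = r.
Proof.
  intros Hint [Hr Hlt]. set (n := L2norm P (fun x => f x - g x)) in *.
  exists (r / n). split.
  - split; [apply Rdiv_lt_0_compat; lra|].
    apply (Rmult_lt_reg_r n); [lra|]. unfold Rdiv; rewrite Rmult_assoc, Rinv_l; lra.
  - rewrite L2norm_segment; [fold n; field; lra | | exact Hint].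
    left; apply Rdiv_lt_0_compat; lra.
Qed.

Lemma excess_segment_le {X : Type} (Ybar : R -> Prop) (lbar : R -> R -> R)
  (Hconv : forall y u v t, Ybar u -> Ybar v -> 0 <= t <= 1 ->
      lbar (t * u + (1 - t) * v) y <= t * lbar u y + (1 - t) * lbar v y)
  (f fstar : X -> R) (Hf : forall x, Ybar (f x)) (Hfstar : forall x, Ybar (fstar x))
  (t : R) (Ht : 0 <= t <= 1) (z : X * R) :
  excess lbar fstar (segment t f fstar) z <= t * excess lbar fstar f z.
Proof.
  unfold excess, lossf, segment.
  pose proof (Hconv (snd z) (f (fst z)) (fstar (fst z)) t (Hf _) (Hfstar _) Ht).
  lra.
Qed.

Lemma PN_excess_segment_nonpos {X : Type} (Ybar : R -> Prop) (lbar : R -> R -> R)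
  (Hconv : forall y u v t, Ybar u -> Ybar v -> 0 <= t <= 1 ->
      lbar (t * u + (1 - t) * v) y <= t * lbar u y + (1 - t) * lbar v y)
  (f fstar : X -> R) (Hf : forall x, Ybar (f x)) (Hfstar : forall x, Ybar (fstar x))
  N data (t : R) (Ht : 0 <= t <= 1) :
  PN N data (excess lbar fstar f) <= 0 ->
  PN N data (excess lbar fstar (segment t f fstar)) <= 0.
Proof.
  intro Hneg.
  apply Rle_trans with (PN N data (fun z => t * excess lbar fstar f z)).
  - apply PN_mono; intro z. now apply (excess_segment_le Ybar).
  - rewrite PN_scal.
    assert (t * PN N data (excess lbar fstar f) <= t * 0)
      by (apply Rmult_le_compat_l; lra).
    lra.
Qed.

Lemma PN_excess_erm_nonpos {X : Type} (lbar : R -> R -> R) (fhat fstar : X -> R) N data :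
  PN N data (lossf lbar fhat) <= PN N data (lossf lbar fstar) ->
  PN N data (excess lbar fstar fhat) <= 0.
Proof. intro Herm. unfold excess. rewrite PN_sub. lra. Qed.

Lemma excess_le_of_deviation (E En c : R) :
  Rabs (E - En) <= c -> En <= 0 -> E <= c.
Proof. intros Hdev Hneg. pose proof (Rle_abs (E - En)). lra. Qed.

Lemma bernstein_vs_deviation (A E r : R) :
  0 < A -> 0 < r -> r ^ 2 <= A * E -> E <= / (2 * A) * r ^ 2 -> False.
Proof.
  intros HA Hr HBern Hdev.
  assert (A * E <= A * (/ (2 * A) * r ^ 2)) by (apply Rmult_le_compat_l; lra).
  assert (A * (/ (2 * A) * r ^ 2) = / 2 * r ^ 2) by (field; lra).
  assert (0 < r ^ 2) by (apply pow_lt; lra).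
  lra.
Qed.

Theorem proposition3
  (X : Type) (P : Expectation (X * R))
  (Ybar : R -> Prop) (HYbar : convex_set Ybar)
  (F : (X -> R) -> Prop)
  (HFrange : forall f, F f -> forall x, Ybar (f x))
  (HFL2 : forall f, F f -> integrable P (fun z => (f (fst z)) ^ 2))
  (lbar : R -> R -> R)
  (Hloss_int : forall f, F f -> integrable P (lossf lbar f))
  (fstar : X -> R) (Hfstar : F fstar)
  (Hmin : forall f, F f -> expect P (lossf lbar fstar) <= expect P (lossf lbar f))
  (Huniq : forall f, F f -> expect P (lossf lbar f) = expect P (lossf lbar fstar) ->
                      L2norm P (fun x => f x - fstar x) = 0)
  (* (Lip-Conv) *)
  (L : R) (HL : 0 < L)
  (Hconv : forall y u v t, Ybar u -> Ybar v -> 0 <= t <= 1 ->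
      lbar (t * u + (1 - t) * v) y <= t * lbar u y + (1 - t) * lbar v y)
  (Hlip : forall y u v, Ybar u -> Ybar v -> Rabs (lbar u y - lbar v y) <= L * Rabs (u - v))
  (* (Conv) *)
  (HFconv : convex_class F)
  (* complexity parameter theta |-> r_2(theta) (positive) *)
  (r2 : R -> R) (Hr2 : forall theta, 0 < theta -> 0 < r2 theta)
  (* (Bern-ERM) *)
  (A : R) (HA : 0 < A)
  (HBern : forall f, F f -> L2norm P (fun x => f x - fstar x) = r2 (/ (2 * A)) ->
      (L2norm P (fun x => f x - fstar x)) ^ 2 <= A * expect P (excess lbar fstar f))
  (* data *)
  (N : nat) (HN : (0 < N)%nat) (data : nat -> X * R)
  (* the event Omega, with theta = 1/(2A) *)
  (HOmega : forall f, F f -> L2norm P (fun x => f x - fstar x) <= r2 (/ (2 * A)) ->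
      Rabs (expect P (excess lbar fstar f) - PN N data (excess lbar fstar f))
        <= / (2 * A) * (r2 (/ (2 * A))) ^ 2)
  (* an empirical risk minimiser *)
  (fhat : X -> R) (Hfhat : F fhat)
  (Herm : forall f, F f -> PN N data (lossf lbar fhat) <= PN N data (lossf lbar f)) :
  L2norm P (fun x => fhat x - fstar x) <= r2 (/ (2 * A)) /\
  expect P (excess lbar fstar fhat) <= / (2 * A) * (r2 (/ (2 * A))) ^ 2.
Proof.
  set (r := r2 (/ (2 * A))).
  assert (Hr : 0 < r) by (apply Hr2, Rinv_0_lt_compat; lra).
  assert (Hhat : PN N data (excess lbar fstar fhat) <= 0)
    by (apply PN_excess_erm_nonpos, Herm, Hfstar).
  assert (Hloc : L2norm P (fun x => fhat x - fstar x) <= r).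
  { apply Rnot_lt_le; intro Hfar.
    assert (Hint : integrable P (fun z => (fhat (fst z) - fstar (fst z)) ^ 2))
      by (apply integrable_sq_diff; auto; apply (HFL2 (segment (/ 2) fhat fstar)),
            HFconv; auto; lra).
    destruct (segment_hits_sphere P fhat fstar r Hint (conj Hr Hfar))
      as [t [Ht Hsphere]].
    assert (Hft : F (segment t fhat fstar)) by (apply HFconv; auto; lra).
    assert (Hemp : PN N data (excess lbar fstar (segment t fhat fstar)) <= 0)
      by (apply (PN_excess_segment_nonpos Ybar); auto; lra).
    apply (bernstein_vs_deviation A (expect P (excess lbar fstar (segment t fhat fstar))) r HA Hr).
    - rewrite <- Hsphere at 1. now apply HBern.
    - apply (excess_le_of_deviation _ _ _ (HOmega _ Hft (Req_le _ _ Hsphere)) Hemp). }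
  split; [exact Hloc|].
  exact (excess_le_of_deviation _ _ _ (HOmega fhat Hfhat Hloc) Hhat).
Qed.
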